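(* For all integers $t,l,n\ge1$, $\beth(t,l^2,n)\ge \beth(2t,l,n)$.
   Context: Fix a totally ordered alphabet with the given number of letters. A word is primitive if it is not of the form $v^k$ with $k>1$. A system of type $X(t,l)$ is a finite sequence $(w_1,\dots,w_N)$ of primitive words of length $t$ over an $l$-letter totally ordered alphabet, no two of which are cyclic shifts of each other. For $1\le i\le N$, $1\le j\le t$, let $w(i,j)$ be the cyclic shift of $w_i$ beginning with its $j$-th letter. Define a strict partial order on the pairs $(i,j)$ by $(i_1,j_1)\prec(i_2,j_2)$ iff $i_1<i_2$ and $w(i_1,j_1)$ is lexicographically smaller than $w(i_2,j_2)$. The system is $n$-light if there are no $n$ pairwise $\prec$-incomparable pairs. $\beth(t,l,n)$ denotes the largest $N$ of an $n$-light system of type $X(t,l)$. *)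

From mathcomp Require Import all_boot.
From Stdlib Require Import ClassicalEpsilon.
Set Implicit Arguments. Unset Strict Implicit. Unset Printing Implicit Defensive.

Definition word (l : nat) := seq 'I_l.

Definition primitive (l : nat) (w : word l) : Prop :=
  ~ exists (v : word l) (k : nat), 1 < k /\ w = flatten (nseq k v).

Fixpoint lexlt (u v : seq nat) : bool :=
  match u, v with
  | [::], [::] => false
  | [::], _ :: _ => true
  | _ :: _, [::] => false
  | a :: u', b :: v' => (a < b) || ((a == b) && lexlt u' v')
  end.

Definition word_lt (l : nat) (u v : word l) : bool :=
  lexlt (map (@nat_of_ord l) u) (map (@nat_of_ord l) v).

(* the cyclic shift of w beginning with its (j+1)-th letter (0-indexed j) *)
Definition shift (l : nat) (w : word l) (j : nat) : word l := rot j w.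

Definition cyclic_shift_of (l : nat) (u w : word l) : Prop :=
  exists j, j < size w /\ u = shift w j.

(* system of type X(t,l): list (w_1,...,w_N) (0-indexed) *)
Definition is_system (t l : nat) (ws : seq (word l)) : Prop :=
  (forall i, i < size ws -> size (nth [::] ws i) = t) /\
  (forall i, i < size ws -> primitive (nth [::] ws i)) /\
  (forall i k, i < size ws -> k < size ws -> i <> k ->
     ~ cyclic_shift_of (nth [::] ws i) (nth [::] ws k)).

(* pairs (i,j) with i < N, j < t, both 0-indexed *)
Definition prec (l : nat) (ws : seq (word l)) (p q : nat * nat) : bool :=
  (p.1 < q.1) && word_lt (shift (nth [::] ws p.1) p.2) (shift (nth [::] ws q.1) q.2).

Definition n_light (t l n : nat) (ws : seq (word l)) : Prop :=
  ~ exists S : seq (nat * nat),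
      [/\ size S = n, uniq S,
          (forall p, p \in S -> p.1 < size ws /\ p.2 < t) &
          (forall p q, p \in S -> q \in S -> p <> q -> ~~ prec ws p q)].

Definition has_light_system (t l n N : nat) : Prop :=
  exists ws : seq (word l), size ws = N /\ is_system t ws /\ n_light t n ws.

Definition decP (P : Prop) : bool :=
  if excluded_middle_informative P then true else false.

(* beth(t,l,n): the largest N of an n-light system of type X(t,l).
   Any system has pairwise distinct words of length t, so N <= l^t;
   the maximum over N <= l^t is therefore the true maximum. *)
Definition beth (t l n : nat) : nat :=
  \max_(N < (l ^ t).+1 | decP (has_light_system t l n N)) N.

From Pilot Require Import Defs.
From mathcomp Require Import all_boot.
From mathcomp Require Import zify.
From Stdlib Require Import ClassicalEpsilon.

Set Implicit Arguments.
Unset Strict Implicit.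
Unset Printing Implicit Defensive.

(* Read a word of length 2t over an l-letter alphabet as a word of length t
   over the alphabet of pairs of letters, coded in base l as a * l + b.  This
   coding is lexicographic, so pairing preserves the order of words; it turns
   the rotation by 2j into the rotation by j, and it is inverted by splitting
   letters again, so primitivity and non-conjugacy are preserved.  An antichain
   of pairs (i, j) for the paired system gives the antichain of pairs (i, 2j)
   for the original one, hence n-lightness is preserved too. *)

Section Pairing.
Variable l : nat.

Lemma ltn_radix2 (a b c d : nat) : b < l -> d < l ->
  (a * l + b < c * l + d) = (a < c) || ((a == c) && (b < d)).
Proof.
move=> lt_b lt_d; case: (ltngtP a c) => [lt_ac|lt_ca|->] /=.
- by apply/idP; nia.
- by apply/negbTE; rewrite -leqNgt; nia.
- by rewrite ltn_add2l.
Qed.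

Lemma eqn_radix2 (a b c d : nat) : b < l -> d < l ->
  (a * l + b == c * l + d) = (a == c) && (b == d).
Proof.
move=> lt_b lt_d; case: (ltngtP a c) => [lt_ac|lt_ca|->] /=.
- by apply/eqP; nia.
- by apply/eqP; nia.
- by rewrite eqn_add2l.
Qed.

Lemma pair_letter_subproof (a b : 'I_l) : a * l + b < l ^ 2.
Proof. by have := ltn_ord a; have := ltn_ord b; rewrite expnS expn1; nia. Qed.

Definition pair_letter (a b : 'I_l) : 'I_(l ^ 2) := Ordinal (pair_letter_subproof a b).

Lemma alphabet_pos (x : 'I_(l ^ 2)) : 0 < l.
Proof. by case: l x => [|//] [x]; rewrite expnS mul0n. Qed.

Lemma split_letter_subproof1 (x : 'I_(l ^ 2)) : x %/ l < l.
Proof. by rewrite ltn_divLR ?(alphabet_pos x) // -expnSr ltn_ord. Qed.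

Lemma split_letter_subproof2 (x : 'I_(l ^ 2)) : x %% l < l.
Proof. by rewrite ltn_mod (alphabet_pos x). Qed.

Definition split_letter (x : 'I_(l ^ 2)) : word l :=
  [:: Ordinal (split_letter_subproof1 x); Ordinal (split_letter_subproof2 x)].

Lemma pair_letterK a b : split_letter (pair_letter a b) = [:: a; b].
Proof.
have l_gt0 : 0 < l by have := ltn_ord a; lia.
congr [:: _; _]; apply: val_inj => /=.
  by rewrite divnMDl // divn_small ?addn0.
by rewrite modnMDl modn_small.
Qed.

Fixpoint pairup (w : word l) : word (l ^ 2) :=
  if w is a :: b :: w' then pair_letter a b :: pairup w' else [::].

Definition unpair (v : word (l ^ 2)) : word l := flatten (map split_letter v).

Lemma unpair_cat u v : unpair (u ++ v) = unpair u ++ unpair v.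
Proof. by rewrite /unpair map_cat flatten_cat. Qed.

Lemma unpair_nseq k v : unpair (flatten (nseq k v)) = flatten (nseq k (unpair v)).
Proof. by elim: k => //= k IHk; rewrite unpair_cat IHk. Qed.

Lemma size_pairup t w : size w = 2 * t -> size (pairup w) = t.
Proof.
elim: t w => [|t IHt] [|a [|b w]] //= sz_w; try lia.
by rewrite IHt //; lia.
Qed.

Lemma pairupK t w : size w = 2 * t -> unpair (pairup w) = w.
Proof.
elim: t w => [|t IHt] [|a [|b w]] sz_w //; try (simpl in sz_w; lia).
rewrite -[unpair _]/(split_letter (pair_letter a b) ++ unpair (pairup w)).
by rewrite pair_letterK IHt //=; simpl in sz_w; lia.
Qed.

Lemma pairup_cat t u v : size u = 2 * t -> pairup (u ++ v) = pairup u ++ pairup v.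
Proof.
elim: t u => [|t IHt] [|a [|b u]] //= sz_u; try lia.
by rewrite IHt //; lia.
Qed.

Lemma rot_pairup t j w : size w = 2 * t -> j <= t ->
  rot j (pairup w) = pairup (rot (2 * j) w).
Proof.
move=> sz_w le_jt.
have sz_take : size (take (2 * j) w) = 2 * j by rewrite size_take; case: ifP; lia.
have sz_drop : size (drop (2 * j) w) = 2 * (t - j) by rewrite size_drop; lia.
rewrite -{1}(cat_take_drop (2 * j) w) (pairup_cat _ sz_take) /rot (pairup_cat _ sz_drop).
by rewrite drop_size_cat ?take_size_cat // (size_pairup sz_take).
Qed.

Lemma word_lt_pairup t u v : size u = 2 * t -> size v = 2 * t ->
  word_lt (pairup u) (pairup v) = word_lt u v.
Proof.
rewrite /word_lt; elim: t u v => [|t IHt] [|a [|b u]] [|c [|d v]] //= sz_u sz_v; try lia.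
rewrite IHt; try lia.
rewrite ltn_radix2 ?eqn_radix2 //.
by case: (a < c); case: (a == c :> nat); case: (b < d); case: (b == d :> nat).
Qed.

Lemma primitive_pairup t w : size w = 2 * t -> primitive w -> primitive (pairup w).
Proof.
move=> sz_w prim_w [v [k [gt1_k pw_eq]]]; apply: prim_w.
by exists (unpair v), k; rewrite -(pairupK sz_w) pw_eq unpair_nseq.
Qed.

Lemma cyclic_shift_of_pairup t u w : size u = 2 * t -> size w = 2 * t ->
  cyclic_shift_of (pairup u) (pairup w) -> cyclic_shift_of u w.
Proof.
move=> sz_u sz_w [j []]; rewrite (size_pairup sz_w) /shift => lt_jt pu_eq.
exists (2 * j); split; first by rewrite sz_w; lia.
have sz_rot : size (rot (2 * j) w) = 2 * t by rewrite size_rot.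
by rewrite -(pairupK sz_u) pu_eq (rot_pairup sz_w) ?(ltnW lt_jt) // (pairupK sz_rot).
Qed.

Lemma nth_map_pairup (ws : seq (word l)) i :
  nth [::] (map pairup ws) i = pairup (nth [::] ws i).
Proof.
case: (ltnP i (size ws)) => [lt_i|le_i]; first by rewrite (nth_map [::]).
by rewrite !nth_default ?size_map.
Qed.

Section PairedSystem.
Variables (t : nat) (ws : seq (word l)).
Hypothesis sz_ws : forall i, i < size ws -> size (nth [::] ws i) = 2 * t.

Let double_shift (p : nat * nat) := (p.1, 2 * p.2).

Lemma prec_pairup p q : p.1 < size ws -> q.1 < size ws -> p.2 <= t -> q.2 <= t ->
  prec (map pairup ws) p q = prec ws (double_shift p) (double_shift q).
Proof.
move=> lt_p1 lt_q1 le_p2 le_q2.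
rewrite /prec /= !nth_map_pairup /shift !(rot_pairup (sz_ws _)) //.
by rewrite (word_lt_pairup (t := t)) // size_rot sz_ws.
Qed.

Lemma is_system_pairup : is_system (2 * t) ws -> is_system t (map pairup ws).
Proof.
move=> [_ [prim_ws nconj_ws]]; rewrite /is_system size_map.
split; [|split] => [i lt_i|i lt_i|i k lt_i lt_k neq_ik]; rewrite ?nth_map_pairup.
- exact: size_pairup (sz_ws lt_i).
- exact: primitive_pairup (sz_ws lt_i) (prim_ws _ lt_i).
- by move/(cyclic_shift_of_pairup (sz_ws lt_i) (sz_ws lt_k)); apply: nconj_ws.
Qed.

Lemma n_light_pairup n : n_light (2 * t) n ws -> n_light t n (map pairup ws).
Proof.
move=> light_ws [S [sz_S uniq_S S_bnd S_anti]]; apply: light_ws.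
have S_bnd' p : p \in S -> p.1 < size ws /\ p.2 < t.
  by rewrite -(size_map pairup); apply: S_bnd.
have inj_double : injective double_shift by move=> [? ?] [? ?] [-> ?]; congr pair; lia.
exists (map double_shift S); split.
- by rewrite size_map.
- by rewrite map_inj_uniq.
- by move=> _ /mapP [p /S_bnd' [lt_p1 lt_p2] ->]; split; rewrite //= ltn_pmul2l.
- move=> _ _ /mapP [p p_S ->] /mapP [q q_S ->] neq_pq.
  have [lt_p1 lt_p2] := S_bnd' p p_S; have [lt_q1 lt_q2] := S_bnd' q q_S.
  have neq_pq' : p <> q by move=> eq_pq; apply: neq_pq; rewrite eq_pq.
  by have := S_anti p q p_S q_S neq_pq'; rewrite prec_pairup // ltnW.
Qed.

End PairedSystem.

Lemma has_light_system_pairup t n N :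
  has_light_system (2 * t) l n N -> has_light_system t (l ^ 2) n N.
Proof.
move=> [ws [<- [sys_ws light_ws]]]; have [sz_ws _] := sys_ws.
exists (map pairup ws); rewrite size_map.
by split; last split; [| exact: is_system_pairup | exact: n_light_pairup].
Qed.

End Pairing.

Lemma decPE (P : Prop) : Defs.decP P <-> P.
Proof. by rewrite /Defs.decP; case: excluded_middle_informative. Qed.

Theorem mainTheorem18 (t l n : nat) :
  1 <= t -> 1 <= l -> 1 <= n -> beth (2 * t) l n <= beth t (l ^ 2) n.
Proof.
move=> _ _ _; apply/bigmax_leqP => N /decPE light_N.
have lt_N : N < ((l ^ 2) ^ t).+1 by rewrite -expnM ltn_ord.
apply: (@leq_bigmax_cond _ _ (@nat_of_ord _) (Ordinal lt_N)).
exact/decPE/has_light_system_pairup.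
Qed.
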